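(* Let $d,n$ be positive integers and let $\mathcal D$ be a Ferrers diagram of order $n$ with $\mathcal D\cap\{d-1,\dots,n\}^2\ne\emptyset$, such that $(\mathcal D,d)$ is in $(a,b)$-standard form. Then for all $i\in\{1,\dots,d-1\}$, $$\nu_i(\mathcal D,d)-\nu_{i-1}(\mathcal D,d)=b-a+d-2i+c_{d-i}(X)-c_i(Y),$$ and consequently, for all $j\in\{1,\dots,d-1\}$, $$\nu_j(\mathcal D,d)-\nu_0(\mathcal D,d)=j(b-a+d-1-j)+\sum_{i=1}^{j}c_{d-i}(X)-\sum_{i=1}^{j}c_i(Y).$$
   Context: A Ferrers diagram is a finite $\mathcal D\subseteq\{1,2,\dots\}^2$ such that $(x,y)\in\mathcal D$ implies $(i,j)\in\mathcal D$ for all $1\le i\le x$, $1\le j\le y$ (first coordinate = row, second = column); order $n$ means $\mathcal D\subseteq\{1,\dots,n\}^2$. For $0\le j\le d-1$, $\nu_j(\mathcal D,d)$ is the number of $(x,y)\in\mathcal D$ with $x\ge d-j$ and $y\ge j+1$ (equivalently $\sum_{i\ge j+1}\max\{0,c_i-d+j\}$ with $c_i$ the column heights). For integers $a,b\ge d-1$, $(\mathcal D,d)$ is in $(a,b)$-standard form if $\mathcal D\cap\{d-1,\dots,n\}^2=\{d-1,\dots,a\}\times\{d-1,\dots,b\}$. In that case, for $i\in\{1,\dots,d-2\}$, $c_i(X)=|\{y>b:(i,y)\in\mathcal D\}|$ and $c_i(Y)=|\{x>a:(x,i)\in\mathcal D\}|$, and by convention $c_{d-1}(X)=c_{d-1}(Y)=0$.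 *)

From HB Require Import structures.
From mathcomp Require Import all_boot all_order all_algebra.
From mathcomp Require Import finmap.
Set Implicit Arguments. Unset Strict Implicit. Unset Printing Implicit Defensive.
Local Open Scope fset_scope.

Definition ferrers (D : {fset (nat * nat)}) : Prop :=
  (forall p, p \in D -> 1 <= p.1 /\ 1 <= p.2)%N /\
  (forall x y i j, (x, y) \in D -> (1 <= i <= x)%N -> (1 <= j <= y)%N ->
     (i, j) \in D).

Definition of_order (D : {fset (nat * nat)}) (n : nat) : Prop :=
  forall p, p \in D -> (1 <= p.1 <= n)%N /\ (1 <= p.2 <= n)%N.

Definition nu (D : {fset (nat * nat)}) (d j : nat) : nat :=
  #|` [fset p in D | (d - j <= p.1)%N && (j.+1 <= p.2)%N] |.

Definition standard_form (D : {fset (nat * nat)}) (n d a b : nat) : Prop :=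
  (d.-1 <= a)%N /\ (d.-1 <= b)%N /\
  forall x y,
    [&& (x, y) \in D, (d.-1 <= x <= n)%N & (d.-1 <= y <= n)%N] =
    ((d.-1 <= x <= a)%N && (d.-1 <= y <= b)%N).

Definition cX (D : {fset (nat * nat)}) (d b i : nat) : nat :=
  if i == d.-1 then 0%N
  else #|` [fset p in D | (p.1 == i) && (b < p.2)%N] |.

Definition cY (D : {fset (nat * nat)}) (d a i : nat) : nat :=
  if i == d.-1 then 0%N
  else #|` [fset p in D | (p.2 == i) && (a < p.1)%N] |.

From HB Require Import structures.
From mathcomp Require Import all_boot all_order all_algebra.
From mathcomp Require Import finmap zify ring.
Import GRing.Theory Num.Theory.

(* Both nu_i and nu_(i-1) count the cells with x > d - i and y > i; besides
   these, nu_i counts the cells of row d - i right of column i, and nu_(i-1)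
   the cells of column i below row d - i.  In standard form the corners
   (d-1, b) and (a, d-1) lie in D, so rows 1..d-1 are full up to column b and
   columns 1..d-1 full down to row a: the row segment has b - i + c_(d-i)(X)
   cells and the column segment a - d + i + c_i(Y).  Row d - 1 and column d - 1
   stop exactly at b and a, which is why c_(d-1) = 0 fits.  The second
   identity telescopes the first. *)

Lemma card_fset_sep (T : choiceType) (A : {fset T}) (P : pred T) :
  #|` [fset x in A | P x]%fset| = count P A.
Proof. by rewrite card_fset_sum1 -big_fset_condE sum1_count. Qed.

Lemma count_split (T : Type) (P Q R : pred T) (s : seq T) :
  (forall x, P x = Q x + R x :> nat) -> count P s = count Q s + count R s.
Proof. by move=> PQR; elim: s => //= x s ->; rewrite PQR addnACA. Qed.

Lemma count_row_interval (s : seq (nat * nat)) r k b :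
  uniq s -> (forall y, k < y <= b -> (r, y) \in s) ->
  count (fun p => (p.1 == r) && (k < p.2 <= b)) s = b - k.
Proof.
move=> s_uniq row_in_s; rewrite -size_filter.
have /perm_size -> : perm_eq [seq p <- s | (p.1 == r) && (k < p.2 <= b)]
                             [seq (r, y) | y <- index_iota k.+1 b.+1].
  apply: uniq_perm; first exact: filter_uniq.
    by rewrite map_inj_uniq ?iota_uniq // => y z [].
  move=> [x y]; rewrite mem_filter /=.
  apply/idP/mapP => [/andP[/andP[/eqP-> ky] _] | [z]].
    by exists y; rewrite // mem_index_iota ltnS.
  by rewrite mem_index_iota ltnS => kz [-> ->]; rewrite eqxx kz row_in_s.
by rewrite size_map size_iota subSS.
Qed.

Definition swap_pair (A B : Type) (p : A * B) : B * A := (p.2, p.1).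

Lemma swap_pair_inj (A B : Type) : injective (@swap_pair A B).
Proof. by move=> [? ?] [? ?] [-> ->]. Qed.

Lemma count_col_interval (s : seq (nat * nat)) c k a :
  uniq s -> (forall x, k < x <= a -> (x, c) \in s) ->
  count (fun p => (p.2 == c) && (k < p.1 <= a)) s = a - k.
Proof.
move=> s_uniq col_in_s.
rewrite -(count_row_interval (map (@swap_pair _ _) s) c) ?count_map //.
  by rewrite map_inj_uniq //; exact: swap_pair_inj.
by move=> x /col_in_s /(map_f (@swap_pair _ _)).
Qed.

Lemma nu_split_row D d i : i <= d ->
  nu D d i = count (fun p => (d - i < p.1) && (i < p.2)) D
             + count (fun p => (p.1 == d - i) && (i < p.2)) D.
Proof. by move=> i_range; rewrite /nu card_fset_sep; apply: count_split => -[x y] /=; lia. Qed.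

Lemma nu_split_col D d i : 0 < i <= d ->
  nu D d i.-1 = count (fun p => (d - i < p.1) && (i < p.2)) D
                + count (fun p => (p.2 == i) && (d - i < p.1)) D.
Proof. by move=> i_range; rewrite /nu card_fset_sep; apply: count_split => -[x y] /=; lia. Qed.

Section StandardForm.

Variables (D : {fset (nat * nat)}) (n d a b : nat).
Hypotheses (D_ferrers : ferrers D) (D_order : of_order D n)
  (D_std : standard_form D n d a b).

Lemma standard_form_corners : (d.-1, b) \in D /\ (a, d.-1) \in D.
Proof.
have [da [db eqD]] := D_std.
have := eqD d.-1 b; have := eqD a d.-1; rewrite da db !leqnn /=.
by move=> /and3P[-> _ _] /and3P[-> _ _].
Qed.

Lemma row_in_diagram r y : 0 < r <= d.-1 -> 0 < y <= b -> (r, y) \in D.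
Proof.
by have [_ down_closed] := D_ferrers; apply: down_closed; case: standard_form_corners.
Qed.

Lemma col_in_diagram x c : 0 < x <= a -> 0 < c <= d.-1 -> (x, c) \in D.
Proof.
by have [_ down_closed] := D_ferrers; apply: down_closed; case: standard_form_corners.
Qed.

Lemma top_row_bounded y : (d.-1, y) \in D -> y <= b.
Proof.
move=> Dy; have [_ [db eqD]] := D_std; have [/andP[_ dn] /andP[_ yn]] := D_order _ Dy.
case: (leqP y b) => // lt_by.
have := eqD d.-1 y; rewrite Dy leqnn dn yn (leq_trans db (ltnW lt_by)) /=.
by move=> /esym/andP[_ yb]; rewrite leqNgt lt_by in yb.
Qed.

Lemma left_col_bounded x : (x, d.-1) \in D -> x <= a.
Proof.
move=> Dx; have [da [_ eqD]] := D_std; have [/andP[_ xn] /andP[_ dn]] := D_order _ Dx.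
case: (leqP x a) => // lt_ax.
have := eqD x d.-1; rewrite Dx leqnn dn xn (leq_trans da (ltnW lt_ax)) /=.
by move=> /esym/andP[xa _]; rewrite leqNgt lt_ax in xa.
Qed.

Lemma cX_count r : cX D d b r = count (fun p => (p.1 == r) && (b < p.2)) D.
Proof.
rewrite /cX card_fset_sep; case: eqP => // ->.
rewrite (eq_in_count (a2 := pred0)) ?count_pred0 // => -[x y] Dxy /=.
by case: eqP Dxy => //= -> /top_row_bounded; rewrite ltnNge => ->.
Qed.

Lemma cY_count c : cY D d a c = count (fun p => (p.2 == c) && (a < p.1)) D.
Proof.
rewrite /cY card_fset_sep; case: eqP => // ->.
rewrite (eq_in_count (a2 := pred0)) ?count_pred0 // => -[x y] Dxy /=.
by case: eqP Dxy => //= -> /left_col_bounded; rewrite ltnNge => ->.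
Qed.

Lemma row_count r k : 0 < r <= d.-1 -> k <= b ->
  count (fun p => (p.1 == r) && (k < p.2)) D = b - k + cX D d b r.
Proof.
move=> r_top kb; rewrite cX_count -(count_row_interval _ r k b (fset_uniq D)).
  by apply: count_split => -[x y] /=; lia.
by move=> y /andP[ky yb]; apply: row_in_diagram; rewrite // (leq_ltn_trans _ ky).
Qed.

Lemma col_count c k : 0 < c <= d.-1 -> k <= a ->
  count (fun p => (p.2 == c) && (k < p.1)) D = a - k + cY D d a c.
Proof.
move=> c_left ka; rewrite cY_count -(count_col_interval _ c k a (fset_uniq D)).
  by apply: count_split => -[x y] /=; lia.
by move=> x /andP[kx xa]; apply: col_in_diagram; rewrite // (leq_ltn_trans _ kx).
Qed.

Lemma nu_step_diff i : 0 < i <= d.-1 ->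
  ((nu D d i)%:Z - (nu D d i.-1)%:Z
   = b%:Z - a%:Z + d%:Z - 2 * i%:Z + (cX D d b (d - i))%:Z - (cY D d a i)%:Z)%R.
Proof.
move=> /andP[i_pos i_top]; have [da [db _]] := D_std.
have i_le_d : i <= d by rewrite (leq_trans i_top) ?leq_pred.
rewrite nu_split_row // nu_split_col ?i_pos // row_count ?col_count; lia.
Qed.

End StandardForm.

Lemma telescope_quadratic (f g h : nat -> int) (c : int) (m : nat) :
  (forall i, 0 < i <= m -> (f i - f i.-1 = c - 2 * i%:Z + g i - h i)%R) ->
  forall j, j <= m ->
  (f j - f 0 = j%:Z * (c - 1 - j%:Z)
               + \sum_(1 <= i < j.+1) g i - \sum_(1 <= i < j.+1) h i)%R.
Proof.
move=> f_step; elim=> [_ | j IHj lt_jm].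
  by rewrite !big_geq // subrr mul0r subr0 addr0.
rewrite !(big_nat_recr j.+1) //=.
have -> : (f j.+1 - f 0 = (f j.+1 - f j) + (f j - f 0))%R by rewrite addrA subrK.
rewrite f_step ?lt_jm // IHj ?(ltnW lt_jm) // intS.
ring.
Qed.

Local Open Scope ring_scope.

Theorem proposition4p11 (d n : nat) (D : {fset (nat * nat)}) (a b : nat) :
  (0 < d)%N -> (0 < n)%N ->
  ferrers D -> of_order D n ->
  (exists2 p, p \in D & (d.-1 <= p.1 <= n)%N && (d.-1 <= p.2 <= n)%N) ->
  standard_form D n d a b ->
  (forall i : nat, (1 <= i <= d.-1)%N ->
     (nu D d i)%:Z - (nu D d i.-1)%:Z
       = b%:Z - a%:Z + d%:Z - 2 * i%:Z + (cX D d b (d - i))%:Z - (cY D d a i)%:Z)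
  /\
  (forall j : nat, (1 <= j <= d.-1)%N ->
     (nu D d j)%:Z - (nu D d 0)%:Z
       = j%:Z * (b%:Z - a%:Z + d%:Z - 1 - j%:Z)
         + \sum_(1 <= i < j.+1) (cX D d b (d - i))%:Z
         - \sum_(1 <= i < j.+1) (cY D d a i)%:Z).
Proof.
move=> _ _ D_ferrers D_order _ D_std.
have nu_step := nu_step_diff _ _ _ _ _ D_ferrers D_order D_std.
split=> // j /andP[_ j_top].
exact: (telescope_quadratic _ _ _ _ _ nu_step).
Qed.
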